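(* Let $G$ be a finite simple graph on $n$ vertices with $m$ edges. Let $I(G)=\sum_{\{u,v\}\in E(G)}|d(u)-d(v)|$, let $Z_G=\sum_{u\in V(G)} d(u)^2$, and let $\lambda_{\max}$ be the largest eigenvalue of the Laplacian matrix of $G$. Then $$I(G)\le \sqrt{m\,(nZ_G-4m^2)\,(\lambda_{\max}/n)}.$$
   Context: $d(u)$ denotes the degree of vertex $u$. The Laplacian matrix $L$ of a graph $G$ with vertex set $\{1,\dots,n\}$ is the $n\times n$ matrix with $L_{ij}=-1$ if $\{i,j\}\in E(G)$, $L_{ij}=0$ if $i\neq j$ and $\{i,j\}\notin E(G)$, and $L_{ii}=d(i)$; it is symmetric positive semidefinite, so its eigenvalues are real and nonnegative. *)

From HB Require Import structures.
From mathcomp Require Import all_boot all_order all_algebra.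
Set Implicit Arguments. Unset Strict Implicit. Unset Printing Implicit Defensive.
Import Order.TTheory GRing.Theory Num.Theory.
Local Open Scope ring_scope.

Definition simple_graph (n : nat) (e : rel 'I_n) : Prop :=
  irreflexive e /\ symmetric e.

Definition deg (n : nat) (e : rel 'I_n) (u : 'I_n) : nat := #|[set v | e u v]|.

Definition nedges (n : nat) (e : rel 'I_n) : nat :=
  #|[set p : 'I_n * 'I_n | (p.1 < p.2)%N && e p.1 p.2]|.

Definition irr_index (R : numDomainType) (n : nat) (e : rel 'I_n) : R :=
  \sum_(u < n) \sum_(v < n | (u < v)%N && e u v)
     `|(deg e u)%:R - (deg e v)%:R : R|.

Definition zagreb1 (n : nat) (e : rel 'I_n) : nat := \sum_(u < n) (deg e u) ^ 2.

Definition laplacian (R : pzRingType) (n : nat) (e : rel 'I_n) : 'M[R]_n :=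
  \matrix_(i < n, j < n)
    (if i == j then (deg e i)%:R else if e i j then -1 else 0).

From HB Require Import structures.
From mathcomp Require Import all_boot all_order all_algebra.
From mathcomp Require Import ring complex.
Set Implicit Arguments. Unset Strict Implicit. Unset Printing Implicit Defensive.
Import Order.TTheory GRing.Theory Num.Theory.
Local Open Scope ring_scope.

(* Write d for the degree vector, m for the number of edges and c = 2m/n for
   the mean degree.  The Laplacian quadratic form of x is the sum over edges
   of (x_u - x_v)^2, so at x = d - c it is the sum of (d_u - d_v)^2, while the
   Rayleigh bound gives at most lmax |d - c|^2 = lmax (Z_G - 4m^2/n).  By
   Cauchy-Schwarz over the m edges, I(G)^2 is at most m times that sum. *)

Section SpectralBound.
Import Num.Def.
Local Open Scope sesquilinear_scope.

Lemma spectral_diag_eigenvalue (C : numClosedFieldType) n (A : 'M[C]_n) i :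
  A \is normalmx -> eigenvalue A (spectral_diag A 0 i).
Proof.
move=> /orthomx_spectralP A_spec; apply/eigenvalueP.
have P_unit : spectralmx A \in unitmx := spectral_unit A.
set P := spectralmx A in A_spec P_unit *; set D := spectral_diag A in A_spec *.
exists (delta_mx 0 i *m P); last first.
  rewrite mulmx_free_eq0 ?row_free_unit //.
  by apply/eqP => /matrixP/(_ 0 i)/eqP; rewrite !mxE !eqxx oner_eq0.
rewrite A_spec !mulmxA mulmxK //.
by rewrite -[X in X *m P = _]rowE row_diag_mx scalemxAl.
Qed.

Lemma normalmx_quad_le (C : numClosedFieldType) n (A : 'M[C]_n) (l : C) :
  A \is normalmx -> (forall i, spectral_diag A 0 i <= l) ->
  forall x : 'rV_n, (x *m A *m x^t*) 0 0 <= l * (x *m x^t*) 0 0.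
Proof.
move=> /orthomx_spectralP A_spec D_le x.
set P := spectralmx A in A_spec; set D := spectral_diag A in A_spec D_le.
have P_unitary : P \is unitarymx := spectral_unitarymx A.
pose y := x *m P^t*.
have yC : y^t* = P *m x^t* by rewrite /y trmx_mul map_mxM trmxCK.
have -> : x *m A *m x^t* = y *m diag_mx D *m y^t*.
  by rewrite A_spec invmx_unitary // yC /y !mulmxA.
have -> : x *m x^t* = y *m y^t*.
  by rewrite yC /y -!mulmxA [P^t* *m _]mulmxA -invmx_unitary // mulVmx
             ?spectral_unit // mul1mx.
rewrite !mxE mulr_sumr; apply: ler_sum => j _.
rewrite mul_mx_diag !mxE mulrAC [l * _]mulrC.
by rewrite ler_wpM2l ?mul_conjC_ge0.
Qed.

Lemma symmetric_quad_le (R : rcfType) n (A : 'M[R]_n) (l : R) :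
  A^T = A -> (forall mu, eigenvalue A mu -> mu <= l) ->
  forall x : 'rV_n, (x *m A *m x^T) 0 0 <= l * (x *m x^T) 0 0.
Proof.
move=> A_sym A_le x.
(* Over R[i] the matrix is hermitian, so its spectral values are real, hence
   eigenvalues of A itself. *)
pose f := @real_complex_def R (Phant R).
have fC r : conjC (f r) = f r by rewrite conj_Creal //; apply/complex_realP; exists r.
have fC_mx m p (M : 'M[R]_(m, p)) : (map_mx f M)^t* = (map_mx f M)^T.
  by apply/matrixP => i j; rewrite !mxE fC.
have Ac_herm : map_mx f A \is hermsymmx.
  by apply/is_hermitianmxP; rewrite expr0 scale1r fC_mx map_trmx A_sym.
have D_le i : spectral_diag (map_mx f A) 0 i <= f l.
  set d := spectral_diag _ 0 i.
  have d_eig : eigenvalue (map_mx f A) d.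
    exact/spectral_diag_eigenvalue/hermitian_normalmx.
  have d_real := mxOverP (hermitian_spectral_diag_real Ac_herm) 0 i.
  have d_fRe : d = f (complex.Re d) by rewrite /f RRe_real.
  rewrite d_fRe lecR; apply: A_le; rewrite -(eigenvalue_map f).
  by move: d_eig; rewrite {1}d_fRe.
have := normalmx_quad_le (hermitian_normalmx Ac_herm) D_le (map_mx f x).
by rewrite fC_mx map_trmx -!map_mxM !mxE -rmorphM lecR.
Qed.

End SpectralBound.

Definition edge_set n (e : rel 'I_n) : {set 'I_n * 'I_n} :=
  [set p : 'I_n * 'I_n | (p.1 < p.2)%N && e p.1 p.2].

Section GraphSums.
Variables (n : nat) (e : rel 'I_n).

Lemma nedgesE : nedges e = #|edge_set e|.
Proof. by []. Qed.

Lemma sum_edge_setE (V : nmodType) (F : 'I_n -> 'I_n -> V) :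
  \sum_(i < n) \sum_(j < n | (i < j)%N && e i j) F i j =
  \sum_(p in edge_set e) F p.1 p.2.
Proof. by rewrite pair_big_dep; apply: eq_bigl => p; rewrite inE. Qed.

Lemma natr_deg (R : pzSemiRingType) u : (deg e u)%:R = \sum_(v | e u v) 1 :> R.
Proof.
by rewrite sumr_const /deg; congr (_ *+ _); apply: eq_card => v; rewrite inE.
Qed.

Hypothesis e_sym : symmetric e.

Lemma sum_adj_swap (V : nmodType) (F : 'I_n -> 'I_n -> V) :
  \sum_i \sum_(j | e i j) F i j = \sum_i \sum_(j | e i j) F j i.
Proof.
rewrite (exchange_big_dep predT) //; apply: eq_bigr => i _.
by apply: eq_bigl => j; rewrite e_sym.
Qed.

Hypothesis e_irr : irreflexive e.

Lemma sum_adj_halve (V : nmodType) (F : 'I_n -> 'I_n -> V) :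
  (forall i j, F i j = F j i) ->
  \sum_i \sum_(j | e i j) F i j =
  (\sum_(i < n) \sum_(j < n | (i < j)%N && e i j) F i j) *+ 2.
Proof.
move=> F_sym; rewrite mulr2n.
have -> : \sum_i \sum_(j | e i j) F i j =
    \sum_(i < n) \sum_(j < n | (i < j)%N && e i j) F i j +
    \sum_(i < n) \sum_(j < n | (j < i)%N && e i j) F i j.
  rewrite -big_split; apply: eq_bigr => i _ /=.
  rewrite big_mkcond [X in _ = X + _]big_mkcond [X in _ = _ + X]big_mkcond.
  rewrite -big_split; apply: eq_bigr => j _ /=.
  by case: (ltngtP i j) => [||/val_inj->]; rewrite ?e_irr ?addr0 ?add0r.
congr (_ + _); rewrite (exchange_big_dep predT) //; apply: eq_bigr => i _.
by apply: eq_big => [j|j _]; [rewrite e_sym | exact: F_sym].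
Qed.

Lemma sum_deg (R : pzSemiRingType) : \sum_u (deg e u)%:R = (nedges e)%:R *+ 2 :> R.
Proof.
under eq_bigr do rewrite natr_deg.
by rewrite sum_adj_halve // sum_edge_setE sumr_const nedgesE.
Qed.

Lemma laplacian_tr (R : pzRingType) : (laplacian R e)^T = laplacian R e.
Proof. by apply/matrixP => i j; rewrite !mxE eq_sym e_sym; case: eqP => [->|]. Qed.

Lemma laplacian_quad_adj (R : comPzRingType) (x : 'rV[R]_n) :
  (x *m laplacian R e *m x^T) 0 0 =
  \sum_i \sum_(j | e i j) (x 0 i ^+ 2 - x 0 i * x 0 j).
Proof.
have L_ij i j : laplacian R e i j = (deg e i)%:R *+ (i == j) - (e i j)%:R.
  rewrite mxE; case: eqP => [<-|_]; first by rewrite e_irr subr0.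
  by case: (e i j); rewrite sub0r ?oppr0.
rewrite mxE; under eq_bigr do rewrite !mxE mulr_suml.
rewrite exchange_big; apply: eq_bigr => i _.
under eq_bigr do rewrite L_ij mulrBr mulrBl.
rewrite sumrB (bigD1 i) //= big1 => [|j /negbTE ij]; last first.
  by rewrite eq_sym ij mulr0n mulr0 mul0r.
rewrite eqxx mulr1n addr0 sumrB; congr (_ - _).
  by rewrite natr_deg mulr_sumr mulr_suml; apply: eq_bigr => j _; rewrite mulr1 expr2.
rewrite [RHS]big_mkcond; apply: eq_bigr => j _.
by case: (e i j); rewrite ?mulr1 ?mulr0 ?mul0r.
Qed.

Lemma laplacian_quad (R : numDomainType) (x : 'rV[R]_n) :
  (x *m laplacian R e *m x^T) 0 0 =
  \sum_(i < n) \sum_(j < n | (i < j)%N && e i j) (x 0 i - x 0 j) ^+ 2.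
Proof.
apply: (@pmulrnI _ 2) => //=; rewrite -sum_adj_halve => [|i j]; last first.
  by rewrite -sqrrN opprB.
rewrite mulr2n laplacian_quad_adj [X in _ + X = _]sum_adj_swap -big_split.
apply: eq_bigr => i _; rewrite -big_split; apply: eq_bigr => j _ /=.
by ring.
Qed.

End GraphSums.

Lemma cauchy_schwarz_card (R : realDomainType) (I : finType) (A : {pred I})
    (a : I -> R) :
  (\sum_(k in A) a k) ^+ 2 <= #|A|%:R * \sum_(k in A) a k ^+ 2.
Proof.
set S := \sum_(k in A) a k; set Q := \sum_(k in A) a k ^+ 2.
have sum_cst c : \sum_(k in A) c = #|A|%:R * c by rewrite sumr_const mulr_natl.
have sum_sqr_diff k :
    \sum_(l in A) (a k - a l) ^+ 2 = #|A|%:R * a k ^+ 2 - (a k * S) *+ 2 + Q.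
  under eq_bigr do rewrite sqrrB.
  by rewrite !big_split /= sum_cst sumrN sumrMnl -mulr_sumr.
have : 0 <= \sum_(k in A) \sum_(l in A) (a k - a l) ^+ 2.
  by do 2!(apply: sumr_ge0 => ? _); exact: sqr_ge0.
rewrite (eq_bigr _ (fun k _ => sum_sqr_diff k)) !big_split /= sumrN sumrMnl.
rewrite -mulr_sumr -mulr_suml sum_cst -/S -/Q.
have -> : #|A|%:R * Q - (S * S) *+ 2 + #|A|%:R * Q = (#|A|%:R * Q - S ^+ 2) *+ 2.
  by rewrite !mulr2n expr2; ring.
by rewrite pmulrn_lge0 // subr_ge0.
Qed.

Lemma sum_sqr_sub_mean (R : numFieldType) n (a : 'I_n -> R) : (0 < n)%N ->
  \sum_i (a i - (\sum_j a j) / n%:R) ^+ 2 =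
  \sum_i a i ^+ 2 - (\sum_i a i) ^+ 2 / n%:R.
Proof.
move=> n_gt0; set S := \sum_j a j; set c := S / n%:R.
have n_neq0 : n%:R != 0 :> R by rewrite pnatr_eq0 -lt0n.
under eq_bigr do rewrite sqrrB.
rewrite !big_split /= sumrN sumrMnl -mulr_suml -/S sumr_const card_ord.
by rewrite -mulr_natr mulr2n /c; field.
Qed.

Lemma irr_index_sqr_le (R : realDomainType) n (e : rel 'I_n) :
  irr_index R e ^+ 2 <=
  (nedges e)%:R * \sum_(p in edge_set e) ((deg e p.1)%:R - (deg e p.2)%:R) ^+ 2.
Proof.
rewrite /irr_index sum_edge_setE nedgesE.
under [X in _ <= _ * X]eq_bigr do rewrite -real_normK ?num_real //.
exact: cauchy_schwarz_card.
Qed.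

Lemma sum_edge_deg_diff_sqr_le (R : rcfType) n (e : rel 'I_n) (lmax : R) :
  simple_graph e -> (forall mu, eigenvalue (laplacian R e) mu -> mu <= lmax) ->
  (0 < n)%N ->
  \sum_(p in edge_set e) ((deg e p.1)%:R - (deg e p.2)%:R) ^+ 2 <=
  lmax * ((zagreb1 e)%:R - ((nedges e)%:R *+ 2) ^+ 2 / n%:R).
Proof.
case=> e_irr e_sym L_le n_gt0.
pose d u : R := (deg e u)%:R.
pose x := \row_u (d u - (\sum_v d v) / n%:R).
have := symmetric_quad_le (laplacian_tr e_sym R) L_le x.
rewrite laplacian_quad // sum_edge_setE.
have -> : (x *m x^T) 0 0 = \sum_u (d u - (\sum_v d v) / n%:R) ^+ 2.
  by rewrite mxE; apply: eq_bigr => u _; rewrite !mxE expr2.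
have Z_sum : (zagreb1 e)%:R = \sum_u d u ^+ 2 :> R.
  by rewrite natr_sum; apply: eq_bigr => u _; rewrite natrX.
rewrite sum_sqr_sub_mean // -Z_sum sum_deg //.
under eq_bigr do rewrite !mxE opprD addrACA subrr addr0.
exact.
Qed.

Theorem theorem2 (R : rcfType) (n : nat) (e : rel 'I_n) (lmax : R) :
  simple_graph e ->
  eigenvalue (laplacian R e) lmax ->
  (forall mu : R, eigenvalue (laplacian R e) mu -> mu <= lmax) ->
  irr_index R e <=
    Num.sqrt ((nedges e)%:R
              * ((n * zagreb1 e)%:R - 4 * (nedges e)%:R ^+ 2)
              * (lmax / n%:R)).
Proof.
move=> e_simple _ L_le.
have [n0|n_gt0] := posnP n.
  by subst n; rewrite /irr_index big_ord0 sqrtr_ge0.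
have irr_ge0 : 0 <= irr_index R e by do 2!(apply: sumr_ge0 => ? _).
rewrite -(ger0_norm irr_ge0) -sqrtr_sqr ler_wsqrtr //.
apply: le_trans (irr_index_sqr_le R e) _.
have := ler_wpM2l (ler0n R (nedges e)) (sum_edge_deg_diff_sqr_le e_simple L_le n_gt0).
have n_neq0 : n%:R != 0 :> R by rewrite pnatr_eq0 -lt0n.
by rewrite natrM mulr2n; congr (_ <= _); field.
Qed.
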